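(* Let $\ket{\psi}$ be an $n$-qubit pure state with CP rank $\mathrm{rk}(\ket{\psi})=R$. Then $$\mathcal{C}(\ket{\psi})\le 1-\frac{1}{2^n}\sum_{k=0}^n\binom{n}{k}\max\Big(\frac1R,\;2^{-\min(k,n-k)}\Big).$$
   Context: The CP rank (tensor rank) $\mathrm{rk}(\ket{\psi})$ of an $n$-qubit state is the minimal $r$ such that $\ket{\psi}=\sum_{i=1}^r c_i\bigotimes_{j=1}^n\ket{\phi_i^{(j)}}$ with single-qubit vectors $\ket{\phi_i^{(j)}}$. The concentratable entanglement is $\mathcal{C}(\ket{\psi})=1-\frac{1}{2^{n}}\sum_{\alpha\subseteq [n]}\mathrm{Tr}[\rho_\alpha^2]$, where $\rho_\alpha$ is the reduced density matrix of $\ket{\psi}$ on the qubits in $\alpha$, with $\mathrm{Tr}[\rho_\emptyset^2]=1$. *)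

From HB Require Import structures.
From mathcomp Require Import all_boot all_order all_algebra.
From mathcomp Require Import reals.
From mathcomp Require Export complex.
Set Implicit Arguments. Unset Strict Implicit. Unset Printing Implicit Defensive.
Import Order.TTheory GRing.Theory Num.Theory.
Local Open Scope ring_scope.

Section QubitDefs.
Variable R : realType.
Local Notation C := R[i].

Definition bitstr (n : nat) := {ffun 'I_n -> bool}.

(* an n-qubit (unnormalised) vector: amplitudes on the computational basis *)
Definition qvec (n : nat) := {ffun bitstr n -> C}.

Definition normalized n (psi : qvec n) : Prop :=
  \sum_(x : bitstr n) `|psi x| ^+ 2 = 1.

Definition has_cp_decomp n (psi : qvec n) (r : nat) : Prop :=
  exists (c : 'I_r -> C) (phi : 'I_r -> 'I_n -> bool -> C),
    forall x : bitstr n, psi x = \sum_(i < r) c i * \prod_(j < n) phi i j (x j).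

Definition is_cp_rank n (psi : qvec n) (r : nat) : Prop :=
  has_cp_decomp psi r /\ (forall r', has_cp_decomp psi r' -> (r <= r')%N).

Definition glue n (alpha : {set 'I_n}) (u v : bitstr n) : bitstr n :=
  [ffun j => if j \in alpha then u j else v j].

(* basis strings of the subsystem alpha, represented canonically by full
   strings that are [false] outside alpha *)
Definition supp_in n (alpha : {set 'I_n}) (u : bitstr n) : bool :=
  [forall j, (j \notin alpha) ==> ~~ u j].

(* reduced density matrix rho_alpha = Tr_{complement of alpha} |psi><psi| ,
   entries <u|rho_alpha|v> for u, v basis strings of alpha *)
Definition rdm n (psi : qvec n) (alpha : {set 'I_n}) (u v : bitstr n) : C :=
  \sum_(z : bitstr n | supp_in (~: alpha) z)
     psi (glue alpha u z) * (psi (glue alpha v z))^*.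

Definition purity n (psi : qvec n) (alpha : {set 'I_n}) : C :=
  \sum_(u : bitstr n | supp_in alpha u) \sum_(v : bitstr n | supp_in alpha v)
     rdm psi alpha u v * rdm psi alpha v u.

Definition conc_ent n (psi : qvec n) : C :=
  1 - (2 ^+ n)^-1 * \sum_(alpha : {set 'I_n}) purity psi alpha.

Definition ce_bound (n r : nat) : R :=
  1 - (2 ^+ n)^-1 * \sum_(0 <= k < n.+1)
        ('C(n, k))%:R * Num.max (r%:R)^-1 ((2 ^+ minn k (n - k))^-1).

End QubitDefs.

(* Cut psi along a bipartition alpha | ~: alpha into a matrix M, so that
   rho_alpha = M M^†, Tr rho_alpha = 1 and Tr rho_alpha^2 = tr ((M M^†)^2).
   For every complex matrix, (tr M M^†)^2 <= rank M * tr ((M M^†)^2): writing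
   M = D E with E having rank M orthonormal rows (Gram-Schmidt), this is
   Cauchy-Schwarz for the rank M nonnegative diagonal entries of D^† D.
   Hence Tr rho_alpha^2 >= 1 / rank M, and rank M is at most R (a CP
   decomposition factors M through C^R) and at most 2^min(|alpha|, n - |alpha|)
   (the number of rows, resp. columns, of M that can be nonzero).  Summing over
   alpha grouped by cardinality gives the bound. *)

From HB Require Import structures.
From mathcomp Require Import all_boot all_order all_algebra.
From mathcomp Require Import reals complex spectral sesquilinear.
Set Implicit Arguments. Unset Strict Implicit. Unset Printing Implicit Defensive.
Import Order.TTheory GRing.Theory Num.Theory.
Local Open Scope ring_scope.
Local Open Scope sesquilinear_scope.

Lemma sqr_sum_le_card_sum_sqr (F : numDomainType) (I : finType) (a : I -> F) :
  (forall i, 0 <= a i) -> (\sum_i a i) ^+ 2 <= #|I|%:R * \sum_i a i ^+ 2.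
Proof.
move=> a_ge0.
have sum_sqr_diff_ge0 : 0 <= \sum_i \sum_j (a i - a j) ^+ 2.
  by do 2!apply: sumr_ge0 => ? _; rewrite -realEsqr realB ?ger0_real.
have sum_sqr_diff : \sum_i \sum_j (a i - a j) ^+ 2 =
    \sum_i \sum_j (a i ^+ 2 + a j ^+ 2) - (\sum_i \sum_j a i * a j) *+ 2.
  rewrite -sumrMnl -sumrB; apply: eq_bigr => i _.
  by rewrite -sumrMnl -sumrB; apply: eq_bigr => j _; rewrite sqrrB addrAC.
have sum_sqr : \sum_i \sum_j (a i ^+ 2 + a j ^+ 2) = (#|I|%:R * \sum_i a i ^+ 2) *+ 2.
  under eq_bigr do rewrite big_split sumr_const /=.
  by rewrite big_split /= sumr_const sumrMnl mulr_natl mulr2n.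
have sum_prod : \sum_i \sum_j a i * a j = (\sum_i a i) ^+ 2.
  by rewrite expr2 mulr_suml; apply: eq_bigr => i _; rewrite mulr_sumr.
move: sum_sqr_diff_ge0.
by rewrite sum_sqr_diff sum_sqr sum_prod -mulrnBl pmulrn_lge0 // subr_ge0.
Qed.

Lemma invn_le_of_ge1_mul (F : numFieldType) (m b : nat) (x : F) :
  1 <= m%:R * x -> (m <= b)%N -> b%:R^-1 <= x.
Proof.
move=> one_le_mx le_mb.
have m_gt0 : (0 < m)%N by case: m one_le_mx {le_mb} => //; rewrite mul0r ler10.
apply: (@le_trans _ _ m%:R^-1).
  by rewrite lef_pV2 ?posrE ?ltr0n ?ler_nat // (leq_trans m_gt0).
by rewrite -[_^-1]mulr1 ler_pdivrMl ?ltr0n.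
Qed.

Lemma mxrank_le_card_col_support (F : fieldType) p q (X : 'M[F]_(p, q)) (S : {set 'I_q}) :
  (forall i j, j \notin S -> X i j = 0) -> (\rank X <= #|S|)%N.
Proof.
move=> X0; pose B : 'M[F]_(#|S|, q) := \matrix_(k, j) (enum_val k == j)%:R.
suff -> : X = colsub enum_val X *m B by rewrite (leq_trans (mxrankM_maxr _ _)) ?rank_leq_row.
apply/matrixP => i j; rewrite !mxE; under eq_bigr do rewrite !mxE.
have [jS | jNS] := boolP (j \in S); last first.
  rewrite X0 // big1 // => k _; rewrite (_ : enum_val k == j = false) ?mulr0 //.
  by apply: contraNF jNS => /eqP <-; exact: enum_valP.
rewrite (bigD1 (enum_rank_in jS j)) //= enum_rankK_in // eqxx mulr1 big1 ?addr0 // => k kj.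
rewrite (_ : enum_val k == j = false) ?mulr0 //.
apply: contraNF kj => /eqP kj; apply/eqP/enum_val_inj.
by rewrite kj enum_rankK_in.
Qed.

Lemma mxrank_le_card_row_support (F : fieldType) p q (X : 'M[F]_(p, q)) (S : {set 'I_p}) :
  (forall i j, i \notin S -> X i j = 0) -> (\rank X <= #|S|)%N.
Proof.
by move=> X0; rewrite -mxrank_tr mxrank_le_card_col_support // => j i /X0; rewrite mxE.
Qed.

Section GramTrace.
Variable C : numClosedFieldType.

Lemma mxtrace_sqr_gram p q (M : 'M[C]_(p, q)) :
  \tr ((M *m M^t*) *m (M *m M^t*)) = \tr ((M^t* *m M) *m (M^t* *m M)).
Proof. by rewrite mulmxA mxtrace_mulC !mulmxA. Qed.

Lemma mxtrace_gram_sqr_le p r (D : 'M[C]_(p, r)) :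
  \tr (D *m D^t*) ^+ 2 <= r%:R * \tr ((D *m D^t*) *m (D *m D^t*)).
Proof.
rewrite mxtrace_sqr_gram mxtrace_mulC; set K := D^t* *m D.
have K_adj j k : K k j = (K j k)^*.
  rewrite !mxE rmorph_sum; apply: eq_bigr => i _.
  by rewrite !mxE rmorphM /= conjCK mulrC.
have K_diag_ge0 j : 0 <= K j j.
  by rewrite mxE sumr_ge0 // => i _; rewrite !mxE mulrC -normCK exprn_ge0.
have tr_KK : \tr (K *m K) = \sum_j \sum_k `|K j k| ^+ 2.
  rewrite /mxtrace; apply: eq_bigr => j _; rewrite mxE.
  by apply: eq_bigr => k _; rewrite (K_adj j k) normCK.
have diag_le j : K j j ^+ 2 <= \sum_k `|K j k| ^+ 2.
  rewrite (bigD1 j) //= ger0_norm // lerDl.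
  by apply: sumr_ge0 => k _; rewrite exprn_ge0.
rewrite tr_KK; apply: le_trans (sqr_sum_le_card_sum_sqr K_diag_ge0) _.
by rewrite card_ord ler_wpM2l // ler_sum.
Qed.

Lemma mxtrace_gram_sqr_le_rank p q (M : 'M[C]_(p, q)) :
  \tr (M *m M^t*) ^+ 2 <= (\rank M)%:R * \tr ((M *m M^t*) *m (M *m M^t*)).
Proof.
pose E := schmidt (row_base M).
have E_unitary : E \is unitarymx := schmidt_unitarymx _ (rank_leq_col M).
have /submxP [D M_DE] : (M <= E)%MS.
  by rewrite (submx_trans _ (schmidt_sub _)) ?eq_row_base.
have -> : M *m M^t* = D *m D^t*.
  transitivity ((D *m E) *m (D *m E)^t*); first by rewrite -M_DE.
  by rewrite trmx_mul map_mxM mulmxA mulmxtVK.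
exact: mxtrace_gram_sqr_le.
Qed.

End GramTrace.

Lemma sum_sets_by_card (V : nzSemiRingType) n (f : nat -> V) :
  \sum_(A : {set 'I_n}) f #|A| = \sum_(0 <= k < n.+1) 'C(n, k)%:R * f k.
Proof.
rewrite big_mkord (partition_big (fun A : {set 'I_n} => inord #|A| : 'I_n.+1) predT) //=.
apply: eq_bigr => k _.
rewrite (eq_bigl (fun A => A \in [set A : {set 'I_n} | #|A| == k])); last first.
  move=> A; rewrite !inE -val_eqE /= inordK // ltnS.
  by rewrite (leq_trans (max_card _)) ?card_ord.
transitivity (\sum_(A in [set A : {set 'I_n} | #|A| == k]) f k).
  by apply: eq_bigr => A; rewrite inE => /eqP ->.
by rewrite sumr_const card_draws card_ord mulr_natl.
Qed.

Section Reshape.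
Variable R : realType.
Local Notation C := R[i].
Variable n : nat.
Local Notation N := #|bitstr n|.

Lemma sum_enum_val (F : bitstr n -> C) : \sum_(i < N) F (enum_val i) = \sum_x F x.
Proof. exact/esym/(big_enum_val (A := bitstr n)). Qed.

Definition bits_on (A : {set 'I_n}) (x : bitstr n) : bitstr n :=
  [ffun j => if j \in A then x j else false].

Lemma bits_on_id A x : (bits_on A x == x) = supp_in A x.
Proof.
apply/eqP/forallP => [<- j | x_supp]; first by rewrite ffunE; case: (j \in A).
apply/ffunP => j; rewrite ffunE; case: ifP => // jNA.
by have := x_supp j; rewrite jNA => /negbTE.
Qed.

Lemma sum_glue (alpha : {set 'I_n}) (F : bitstr n -> C) :
  \sum_(u | supp_in alpha u) \sum_(z | supp_in (~: alpha) z) F (glue alpha u z) =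
  \sum_x F x.
Proof.
rewrite [RHS](partition_big (bits_on alpha) (supp_in alpha)); last first.
  by move=> x _; rewrite -bits_on_id; apply/eqP/ffunP => j; rewrite !ffunE; case: (j \in alpha).
apply: eq_bigr => u u_supp.
rewrite [RHS](reindex_onto (glue alpha u) (bits_on (~: alpha))); last first.
  by move=> x /eqP <-; apply/ffunP => j; rewrite !ffunE inE; case: (j \in alpha).
apply: eq_bigl => z.
have -> : bits_on alpha (glue alpha u z) = u.
  move: u_supp; rewrite -bits_on_id => /eqP {2}<-.
  by apply/ffunP => j; rewrite !ffunE; case: (j \in alpha).
have -> : bits_on (~: alpha) (glue alpha u z) = bits_on (~: alpha) z.
  by apply/ffunP => j; rewrite !ffunE inE; case: (j \in alpha).
by rewrite eqxx bits_on_id.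
Qed.

Lemma card_supp_in_enum (A : {set 'I_n}) :
  (#|[set i : 'I_N | supp_in A (enum_val i)]| <= 2 ^ #|A|)%N.
Proof.
pose restrict (i : 'I_N) : {ffun {j | j \in A} -> bool} := [ffun j => enum_val i (val j)].
rewrite -(@card_in_imset _ _ restrict); last first.
  move=> i1 i2; rewrite !inE => supp1 supp2 /ffunP eq12; apply/enum_val_inj/ffunP => j.
  have [jA | jNA] := boolP (j \in A); first by have := eq12 (exist _ j jA); rewrite !ffunE.
  by move/forallP/(_ j): supp1; move/forallP/(_ j): supp2; rewrite jNA => /negbTE -> /negbTE ->.
by rewrite (leq_trans (max_card _)) // card_ffun card_bool card_sig.
Qed.

Variables (psi : qvec R n) (alpha : {set 'I_n}).

(* Rows and columns are
   indexed by all n-bit strings; only rows supported on alpha and columns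
   supported on ~: alpha carry entries, so that psi_mx psi_mx^† is rho_alpha
   padded with zeros. *)
Definition psi_mx : 'M[C]_N := \matrix_(i, j)
  (if supp_in alpha (enum_val i) && supp_in (~: alpha) (enum_val j)
   then psi (glue alpha (enum_val i) (enum_val j)) else 0).

Lemma psi_gram_mxE (u v : bitstr n) :
  (psi_mx *m psi_mx^t*) (enum_rank u) (enum_rank v) =
  if supp_in alpha u && supp_in alpha v then rdm psi alpha u v else 0.
Proof.
rewrite mxE; under eq_bigr do rewrite !mxE !enum_rankK.
have [u_supp | _] /= := boolP (supp_in alpha u); last first.
  by rewrite big1 // => j _; rewrite mul0r.
have [v_supp | _] /= := boolP (supp_in alpha v); last first.
  by rewrite big1 // => j _; rewrite rmorph0 mulr0.
rewrite /rdm [RHS]big_mkcond -sum_enum_val; apply: eq_bigr => j _.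
by case: (supp_in (~: alpha) (enum_val j)); rewrite ?rmorph0 ?mulr0.
Qed.

Lemma purity_psi_mx :
  purity psi alpha = \tr ((psi_mx *m psi_mx^t*) *m (psi_mx *m psi_mx^t*)).
Proof.
set G := psi_mx *m psi_mx^t*.
transitivity (\sum_(u : bitstr n) \sum_(v : bitstr n)
                G (enum_rank u) (enum_rank v) * G (enum_rank v) (enum_rank u)).
  rewrite /purity big_mkcond; apply: eq_bigr => u _; rewrite big_mkcond.
  have [u_supp | u_nsupp] /= := boolP (supp_in alpha u); last first.
    by rewrite big1 // => v _; rewrite !psi_gram_mxE (negbTE u_nsupp) mul0r.
  apply: eq_bigr => v _; rewrite !psi_gram_mxE u_supp.
  by case: (supp_in alpha v); rewrite ?mul0r.
rewrite -sum_enum_val; apply: eq_bigr => i _.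
by rewrite -sum_enum_val mxE; apply: eq_bigr => k _; rewrite !enum_valK.
Qed.

Lemma mxtrace_psi_gram : \tr (psi_mx *m psi_mx^t*) = \sum_x `|psi x| ^+ 2.
Proof.
transitivity (\sum_(u : bitstr n) (psi_mx *m psi_mx^t*) (enum_rank u) (enum_rank u)).
  by rewrite /mxtrace -sum_enum_val; apply: eq_bigr => i _; rewrite enum_valK.
under eq_bigr do rewrite psi_gram_mxE andbb.
rewrite -big_mkcond /= -(sum_glue alpha); apply: eq_bigr => u _.
by apply: eq_bigr => z _; rewrite normCK.
Qed.

Lemma mxrank_psi_mx_le_cp r : has_cp_decomp psi r -> (\rank psi_mx <= r)%N.
Proof.
case=> c [phi psi_decomp].
pose A : 'M[C]_(N, r) := \matrix_(i, k) (if supp_in alpha (enum_val i)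
   then c k * \prod_(j in alpha) phi k j (enum_val i j) else 0).
pose B : 'M[C]_(r, N) := \matrix_(k, l) (if supp_in (~: alpha) (enum_val l)
   then \prod_(j in ~: alpha) phi k j (enum_val l j) else 0).
suff -> : psi_mx = A *m B by rewrite (leq_trans (mxrankM_maxl _ _)) ?rank_leq_col.
apply/matrixP => i l; rewrite !mxE; under eq_bigr do rewrite !mxE.
have [i_supp | _] /= := boolP (supp_in alpha (enum_val i)); last first.
  by rewrite big1 // => k _; rewrite mul0r.
have [l_supp | _] /= := boolP (supp_in (~: alpha) (enum_val l)); last first.
  by rewrite big1 // => k _; rewrite mulr0.
rewrite psi_decomp; apply: eq_bigr => k _.
rewrite (bigID (mem alpha)) /= -mulrA; congr (_ * (_ * _)).
  by apply: eq_bigr => j jA; rewrite ffunE jA.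
by apply: eq_big => [j | j /negbTE jNA]; rewrite ?inE // ffunE jNA.
Qed.

Lemma mxrank_psi_mx_le_exp : (\rank psi_mx <= 2 ^ minn #|alpha| (n - #|alpha|))%N.
Proof.
have rank_le_alpha : (\rank psi_mx <= 2 ^ #|alpha|)%N.
  apply: leq_trans (card_supp_in_enum alpha).
  by apply: mxrank_le_card_row_support => i j; rewrite inE mxE => /negbTE ->.
have rank_le_compl : (\rank psi_mx <= 2 ^ (n - #|alpha|))%N.
  have -> : (n - #|alpha| = #|~: alpha|)%N.
    by move: (cardsC alpha); rewrite card_ord => card_split; rewrite -{1}card_split addKn.
  apply: leq_trans (card_supp_in_enum (~: alpha)).
  by apply: mxrank_le_card_col_support => i j; rewrite inE mxE => /negbTE ->; rewrite andbF.
by rewrite /minn; case: ltnP.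
Qed.

Lemma purity_ge_inv b :
  normalized psi -> (\rank psi_mx <= b)%N -> b%:R^-1 <= purity psi alpha.
Proof.
move=> psi_normed; apply: invn_le_of_ge1_mul.
rewrite purity_psi_mx; apply: le_trans (mxtrace_gram_sqr_le_rank psi_mx).
by rewrite mxtrace_psi_gram psi_normed expr1n.
Qed.

End Reshape.

Local Open Scope complex_scope.

Lemma purity_ge_ce_term (R : realType) n (psi : qvec R n) rk (alpha : {set 'I_n}) :
  normalized psi -> has_cp_decomp psi rk ->
  (Num.max (rk%:R : R)^-1 (2 ^+ minn #|alpha| (n - #|alpha|))^-1)%:C <= purity psi alpha.
Proof.
move=> psi_normed psi_cp.
case: lerP => _; rewrite fmorphV ?rmorphXn rmorph_nat -?natrX; apply: purity_ge_inv => //.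
  exact: mxrank_psi_mx_le_exp.
exact: mxrank_psi_mx_le_cp.
Qed.

Theorem proposition4 (R : realType) (n : nat) (psi : qvec R n) (rk : nat) :
  normalized psi -> is_cp_rank psi rk ->
  conc_ent psi <= (ce_bound R n rk)%:C.
Proof.
move=> psi_normed [psi_cp _].
rewrite /conc_ent /ce_bound rmorphB rmorph1 rmorphM fmorphV rmorphXn rmorph_nat.
rewrite lerD2l lerN2 ler_wpM2l ?invr_ge0 ?exprn_ge0 ?ler0n // raddf_sum /=.
under eq_bigr do rewrite rmorphM rmorph_nat.
rewrite -(sum_sets_by_card _ (fun k => (Num.max (rk%:R : R)^-1 (2 ^+ minn k (n - k))^-1)%:C)).
by apply: ler_sum => alpha _; apply: purity_ge_ce_term.
Qed.
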